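(* Let $\mathcal{F}$ be a regular facets-pairing structure on $\mathcal{C}^n$. Then for every proper face $f$ of $\mathcal{C}^n$ of codimension $s$, the face family $\widehat f$ contains at most $2^s$ faces. Consequently $\widehat f$ has the maximal possible number $2^s$ of elements exactly when it is a perfect face family.
   Context: Let $[\pm n]=\{\pm1,\dots,\pm n\}$ and $\mathcal{C}^n=\{x\in\mathbb{R}^n: -\tfrac14\le x_i\le\tfrac14\}$. For $1\le i\le n$, $\mathbf{F}(i)$ and $\mathbf{F}(-i)$ denote the facets of $\mathcal{C}^n$ in $\{x_i=\tfrac14\}$ and $\{x_i=-\tfrac14\}$; for $j_1,\dots,j_s\in[\pm n]$ with distinct absolute values, $\mathbf{F}(j_1,\dots,j_s)=\bigcap_i\mathbf{F}(j_i)$. A signed permutation is a bijection $\sigma$ of $[\pm n]$ with $\sigma(-k)=-\sigma(k)$. A facets-pairing structure on $\mathcal{C}^n$ is a pair $(\omega,\{\tau_j\})$ where $\omega$ is a bijection of $[\pm n]$ with $\omega\circ\omega=\mathrm{id}$ and $\tau_j:\mathbf{F}(j)\to\mathbf{F}(\omega(j))$ are face-preserving homeomorphisms with $\tau_{\omega(j)}=\tau_j^{-1}$, such that for all $|j|\ne|k|$, writing $\tau_j(\mathbf{F}(j,k))=\mathbf{F}(\omega(j),k')$ and $\tau_k(\mathbf{F}(j,k))=\mathbf{F}(j',\omega(k))$, one has $\tau_{k'}\tau_j(p)=\tau_{j'}\tau_k(p)$ for all $p\in\mathbf{F}(j,k)$. It is regular if each $\tau_j$ is a Euclidean isometry and $\omega$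 is a signed permutation. A composition $\tau_{k_m}\circ\dots\circ\tau_{k_1}(f)$ applied to a proper face $f$ is valid if $f\subset\mathbf{F}(k_1)$ and $\tau_{k_i}\circ\dots\circ\tau_{k_1}(f)\subset\mathbf{F}(k_{i+1})$ for $1\le i<m$ ($m=0$ allowed, giving $f$). The face family $\widehat f$ is the set of all faces of this valid form. A face family $\widehat f$ with $f$ of codimension $s$ is perfect if it has exactly $2^s$ elements. *)

From Stdlib Require Import Reals Ensembles Finite_sets.
From mathcomp Require Import all_boot.
Local Open Scope R_scope.

Set Implicit Arguments.
Unset Strict Implicit.
Unset Printing Implicit Defensive.

Definition pt (n : nat) := 'I_n -> R.

(* Signed indices [+-n]: (i, true) encodes +(i+1), (i, false) encodes -(i+1). *)
Definition sidx (n : nat) := ('I_n * bool)%type.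
Definition sneg n (j : sidx n) : sidx n := (j.1, ~~ j.2).

Definition dist n (x y : pt n) : R :=
  sqrt (foldr (fun i acc => Rplus acc (Rsqr (Rminus (x i) (y i)))) R0 (enum 'I_n)).

Definition cube n (x : pt n) : Prop := forall i : 'I_n, (Ropp (/ 4) <= x i <= / 4)%R.

(* Value of the coordinate |j| on the facet F(j). *)
Definition sval (b : bool) : R := if b then (/ 4)%R else (Ropp (/ 4))%R.

Definition distinct_abs n (J : {set sidx n}) : Prop :=
  forall j k, j \in J -> k \in J -> j.1 = k.1 -> j = k.

Definition face n (J : {set sidx n}) : pt n -> Prop :=
  fun x => cube x /\ forall j, j \in J -> x j.1 = sval j.2.

Definition facet n (j : sidx n) : pt n -> Prop := face [set j].
Definition face2 n (j k : sidx n) : pt n -> Prop := face [set j; k].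

Definition subset_pt n (A B : pt n -> Prop) : Prop := forall x, A x -> B x.

Definition image n (f : pt n -> pt n) (A : pt n -> Prop) : pt n -> Prop :=
  fun y => exists x, A x /\ y = f x.

(* Facets-pairing structure (omega, {tau_j}). The maps tau_j are given as
   total maps R^n -> R^n; only their restriction to F(j) matters. *)
Definition facets_pairing n (omega : sidx n -> sidx n)
    (tau : sidx n -> pt n -> pt n) : Prop :=
  bijective omega /\ (forall j, omega (omega j) = j) /\
  (forall j x, facet j x -> facet (omega j) (tau j x)) /\
  (forall j x, facet j x -> tau (omega j) (tau j x) = x) /\
  (forall j x, facet j x -> forall eps, (0 < eps)%R ->
     exists delta, (0 < delta)%R /\
       forall y, facet j y -> (dist x y < delta)%R ->
         (dist (tau j x) (tau j y) < eps)%R) /\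
  (forall j (J : {set sidx n}), distinct_abs J -> j \in J ->
     exists J' : {set sidx n}, distinct_abs J' /\ omega j \in J' /\
       image (tau j) (face J) = face J') /\
  (forall j k, j.1 <> k.1 ->
     forall k' j', (omega j).1 <> k'.1 -> j'.1 <> (omega k).1 ->
       image (tau j) (face2 j k) = face2 (omega j) k' ->
       image (tau k) (face2 j k) = face2 j' (omega k) ->
       forall p, face2 j k p -> tau k' (tau j p) = tau j' (tau k p)).

Definition regular_facets_pairing n (omega : sidx n -> sidx n)
    (tau : sidx n -> pt n -> pt n) : Prop :=
  facets_pairing omega tau /\
  (forall j x y, facet j x -> facet j y -> dist (tau j x) (tau j y) = dist x y) /\
  (forall k, omega (sneg k) = sneg (omega k)).

Inductive valid_image n (tau : sidx n -> pt n -> pt n) (f : pt n -> Prop)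
  : (pt n -> Prop) -> Prop :=
| valid_nil : valid_image tau f f
| valid_cons (g : pt n -> Prop) (k : sidx n) :
    valid_image tau f g -> subset_pt g (facet k) ->
    valid_image tau f (image (tau k) g).

Definition face_family n (tau : sidx n -> pt n -> pt n) (f : pt n -> Prop)
  : Ensemble (pt n -> Prop) := fun g => valid_image tau f g.

Definition perfect n (tau : sidx n -> pt n -> pt n) (J : {set sidx n}) : Prop :=
  cardinal _ (face_family tau (face J)) (2 ^ #|J|).

(* Every face of C^n is F(K) for a unique set K of signed indices (the facets
   through the center of F(K)), so every point q of the cube determines the
   face F(active q) of the facets through it.  The face-preserving property
   and the compatibility condition of a facets-pairing structure (omega, tau)
   give an injective relabelling of signed indices, relabel k, such that
   - tau_k maps F(K) onto F(relabel k @: K), and relabel (omega k) undoes it;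
   - relabellings along two distinct facets k, l of a face commute:
     relabel (relabel k l) \o relabel k = relabel (relabel l k) \o relabel l.
   To bound the face family of F(J) we follow the center of F(J) along a
   valid composition while labelling J by the facets through the current
   point.  A move along the facet labelled i is an involution and moves along
   distinct labels commute, so every valid composition acts like the moves
   along a subset S of J taken in a fixed order: the face family lies in the
   image of the 2^#|J| subsets of J. *)

From Pilot Require Import Defs.
From Stdlib Require Import Reals Ensembles Finite_sets.
From Stdlib Require Import Finite_sets_facts ClassicalEpsilon Lra.
From mathcomp Require Import all_boot.

Set Implicit Arguments.
Unset Strict Implicit.
Unset Printing Implicit Defensive.

Section CubeFaces.

Variable n : nat.
Implicit Types (x : pt n) (j k l : sidx n) (K : {set sidx n}).

Definition active x : {set sidx n} :=
  [set k | Req_EM_T (x k.1) (Defs.sval k.2)].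

Lemma activeP x k : reflect (x k.1 = Defs.sval k.2) (k \in active x).
Proof. by rewrite inE; apply: sumboolP. Qed.

Lemma sval_inj : injective Defs.sval.
Proof. by case; case => //= h; lra. Qed.

Lemma active_distinct x : distinct_abs (active x).
Proof.
move=> [i b] [i' b'] /activeP /= hj /activeP /= hk /= ei; subst i'.
by rewrite /= (sval_inj (etrans (esym hj) hk)).
Qed.

Lemma faceE K x : face K x <-> cube x /\ K \subset active x.
Proof.
split => [[cx hK]|[cx /subsetP hK]]; split => //.
- by apply/subsetP => k /hK /activeP.
- by move=> k /hK /activeP.
Qed.

Lemma facetE k x : facet k x <-> cube x /\ k \in active x.
Proof. by rewrite /facet faceE sub1set. Qed.

Lemma face_antimono K K' x : K \subset K' -> face K' x -> face K x.
Proof. by move=> sKK' /faceE [cx sK']; apply/faceE; split; last exact: subset_trans sK'. Qed.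

Lemma facet_of_face K k x : k \in K -> face K x -> facet k x.
Proof. by move=> kK; apply: face_antimono; rewrite sub1set. Qed.

Lemma face2C k l : face2 k l = face2 l k.
Proof. by rewrite /face2 setUC. Qed.

Lemma face2_sub K k l x : k \in K -> l \in K -> face K x -> face2 k l x.
Proof. by move=> kK lK; apply: face_antimono; rewrite subUset !sub1set kK lK. Qed.

Definition face_center K : pt n :=
  fun i => if [pick a in K | a.1 == i] is Some a then Defs.sval a.2 else R0.

Lemma face_center_cube K : cube (face_center K).
Proof.
move=> i; rewrite /face_center; case: pickP => [a _|_]; last by split; lra.
by case: a.2 => /=; split; lra.
Qed.

(* The center of F(K) lies on no other facet, so F(K) determines K. *)
Lemma active_face_center K : distinct_abs K -> active (face_center K) = K.
Proof.
move=> dK; apply/setP => k; apply/activeP/idP; rewrite /face_center.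
- case: pickP => [a /andP [aK /eqP ea] /sval_inj eb|_]; last by case: k.2 => /=; lra.
  by have -> : k = a by case: k a ea eb {aK} => [? ?] [? ?] /= -> ->.
- move=> kK; case: pickP => [a /andP [aK /eqP ea]|/(_ k)]; last by rewrite kK eqxx.
  by rewrite (dK _ _ aK kK ea).
Qed.

Lemma face_face_center K : distinct_abs K -> face K (face_center K).
Proof.
move=> dK; apply/faceE; split; first exact: face_center_cube.
by rewrite active_face_center.
Qed.

Lemma face_sub K K' : distinct_abs K -> (forall x, face K x -> face K' x) -> K' \subset K.
Proof.
move=> dK sKK'; have /faceE [_] := sKK' _ (face_face_center dK).
by rewrite active_face_center.
Qed.

Lemma face_inj K K' : distinct_abs K -> distinct_abs K' ->
  (forall x, face K x <-> face K' x) -> K = K'.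
Proof.
move=> dK dK' eKK'; apply/eqP; rewrite eqEsubset.
by rewrite (face_sub dK (fun x => proj1 (eKK' x))) (face_sub dK' (fun x => proj2 (eKK' x))).
Qed.

Lemma distinct_sub K K' : K \subset K' -> distinct_abs K' -> distinct_abs K.
Proof. by move=> /subsetP sKK' dK' j k /sKK' jK /sKK' kK; apply: dK'. Qed.

Lemma distinct1 k : distinct_abs [set k].
Proof. by move=> a b; rewrite !inE => /eqP -> /eqP ->. Qed.

Lemma distinct2 k l : k.1 <> l.1 -> distinct_abs [set k; l].
Proof.
by move=> ne a b; rewrite !inE => /orP [] /eqP -> /orP [] /eqP -> //= e; case: ne.
Qed.

Lemma distinct_cases K k l : distinct_abs K -> k \in K -> l \in K ->
  l = k \/ k.1 <> l.1.
Proof.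
move=> dK kK lK; case: (eqVneq l k) => [->|nlk]; [by left|right].
by move=> e; move/eqP: nlk; apply; symmetry; apply: dK.
Qed.

End CubeFaces.

Lemma image_ext n (f : pt n -> pt n) (A B : pt n -> Prop) :
  (forall x, A x <-> B x) -> forall y, Defs.image f A y <-> Defs.image f B y.
Proof. by move=> eAB y; split; case=> x [/eAB Bx ->]; exists x. Qed.

Lemma image_comp n (f g : pt n -> pt n) (A : pt n -> Prop) y :
  Defs.image f (Defs.image g A) y <-> exists x, A x /\ y = f (g x).
Proof.
split; first by case=> _ [[x [Ax ->]] ->]; exists x.
by case=> x [Ax ->]; exists (g x); split => //; exists x.
Qed.

Lemma agree_from_imsets (T U : finType) (K : {set T}) (f g : T -> U) a b :
  {in K &, injective f} -> a \in K -> b \in K ->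
  (forall S : {set T}, S \subset K -> a \in S -> b \in S -> f @: S = g @: S) ->
  f a = g a -> f b = g b -> {in K, f =1 g}.
Proof.
move=> f_inj aK bK fg fa fb m mK.
have abmK : [set a; b; m] \subset K by rewrite !subUset !sub1set aK bK mK.
have aS : a \in [set a; b; m] by rewrite !inE eqxx.
have bS : b \in [set a; b; m] by rewrite !inE eqxx orbT.
have : f m \in f @: [set a; b; m] by apply: imset_f; rewrite !inE eqxx !orbT.
rewrite (fg _ abmK aS bS) !imsetU !imset_set1 !inE -fa -fb.
case/orP => [/orP []|] /eqP // efm.
- by rewrite (f_inj m a mK aK efm) fa.
- by rewrite (f_inj m b mK bK efm) fb.
Qed.

(* Throughout, (omega, tau) satisfies the axioms of a facets-pairing
   structure other than bijectivity of omega and continuity of tau. *)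
Section Pairing.

Variables (n : nat) (omega : sidx n -> sidx n) (tau : sidx n -> pt n -> pt n).
Implicit Types (x y : pt n) (j k l : sidx n) (K : {set sidx n}).

Hypothesis omegaK : involutive omega.
Hypothesis tau_facet : forall j x, facet j x -> facet (omega j) (tau j x).
Hypothesis tauK : forall j x, facet j x -> tau (omega j) (tau j x) = x.
Hypothesis tau_face : forall j (J : {set sidx n}), distinct_abs J -> j \in J ->
  exists J' : {set sidx n}, distinct_abs J' /\ omega j \in J' /\
    Defs.image (tau j) (face J) = face J'.
Hypothesis tau_cocycle : forall j k, j.1 <> k.1 ->
  forall k' j', (omega j).1 <> k'.1 -> j'.1 <> (omega k).1 ->
    Defs.image (tau j) (face2 j k) = face2 (omega j) k' ->
    Defs.image (tau k) (face2 j k) = face2 j' (omega k) ->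
    forall p, face2 j k p -> tau k' (tau j p) = tau j' (tau k p).

Lemma image_tauK k (A : pt n -> Prop) : (forall x, A x -> facet k x) ->
  forall x, Defs.image (tau (omega k)) (Defs.image (tau k) A) x <-> A x.
Proof.
move=> sAk x; split => [/image_comp [y [Ay ->]]|Ax].
  by rewrite tauK //; apply: sAk.
by apply/image_comp; exists x; rewrite tauK //; apply: sAk.
Qed.

Lemma image_tau_inj k (A B : pt n -> Prop) :
  (forall x, A x -> facet k x) -> (forall x, B x -> facet k x) ->
  (forall y, Defs.image (tau k) A y <-> Defs.image (tau k) B y) ->
  forall x, A x <-> B x.
Proof.
by move=> sAk sBk eAB x; rewrite -(image_tauK sAk) -(image_tauK sBk); apply: image_ext.
Qed.

Lemma image_tau_facet k y : Defs.image (tau k) (facet k) y <-> facet (omega k) y.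
Proof.
split => [[x [kx ->]]|ky]; first exact: tau_facet.
exists (tau (omega k) y); have := tauK ky; have := tau_facet ky.
by rewrite omegaK.
Qed.

Lemma facet_of_face2 k l x : face2 k l x -> facet k x.
Proof. by apply: facet_of_face; rewrite !inE eqxx. Qed.

Lemma pair_image_not_facet k l K : k.1 <> l.1 ->
  Defs.image (tau k) (face2 k l) = face K -> K <> [set omega k].
Proof.
move=> ne eK eKk; subst K; have ekl : forall x, face2 k l x <-> facet k x.
  apply: (image_tau_inj (@facet_of_face2 k l)) => // y.
  by rewrite eK; symmetry; apply: image_tau_facet.
have /setP/(_ l) := face_inj (distinct2 ne) (@distinct1 _ k) ekl.
by rewrite !inE eqxx orbT => /esym /eqP el; apply: ne; rewrite el.
Qed.

Lemma pair_image_back k l K' b : k.1 <> l.1 -> distinct_abs K' -> omega k \in K' ->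
  Defs.image (tau k) (face2 k l) = face K' -> b \in K' -> b != omega k ->
  Defs.image (tau (omega k)) (face2 (omega k) b) = face2 k l.
Proof.
move=> ne dK' kK' eK' bK' nb.
have neb : (omega k).1 <> b.1.
  by case: (distinct_cases dK' kK' bK') => // e; rewrite e eqxx in nb.
have [A [dA [kA eA]]] := tau_face (distinct2 neb) (setU11 _ _).
rewrite omegaK in kA; rewrite eA.
have klA : A \subset [set k; l].
  apply: face_sub (distinct2 ne) _ => x klx; rewrite -eA.
  have [y [y_kl ->]] := proj2 (image_tauK (@facet_of_face2 k l) x) klx.
  by exists y; split => //; move: y_kl; rewrite eK'; apply: face2_sub; rewrite ?setU11.
have nA := pair_image_not_facet neb eA; rewrite omegaK in nA.
congr face; apply/eqP; rewrite eqEsubset klA subUset !sub1set kA /=.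
apply/negPn/negP => lA; apply: nA; apply/eqP; rewrite eqEsubset sub1set kA andbT.
apply/subsetP => z zA; move/subsetP: klA => /(_ _ zA); rewrite !inE.
by case/orP => // /eqP ez; rewrite -ez zA in lA.
Qed.

Lemma pair_image k l : k.1 <> l.1 -> exists l',
  l'.1 <> (omega k).1 /\ Defs.image (tau k) (face2 k l) = face2 (omega k) l'.
Proof.
move=> ne; have [K' [dK' [kK' eK']]] := tau_face (distinct2 ne) (setU11 _ _).
have neK' b : b \in K' -> b != omega k -> b.1 <> (omega k).1.
  by move=> bK' nb; case: (distinct_cases dK' bK' kK') => // e; rewrite e eqxx in nb.
have [a aK' na] : exists2 a, a \in K' & a != omega k.
  case: (pickP [pred a | (a \in K') && (a != omega k)]) => [a /andP [] | none].
    by exists a.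
  exfalso; apply: (pair_image_not_facet ne eK'); apply/eqP.
  rewrite eqEsubset sub1set kK' andbT; apply/subsetP => z zK'.
  by have := none z; rewrite /= zK' inE => /negbFE.
have a_uniq b : b \in K' -> b != omega k -> b = a.
  move=> bK' nb; have eba : forall x, face2 (omega k) b x <-> face2 (omega k) a x.
    apply: (image_tau_inj (@facet_of_face2 _ b) (@facet_of_face2 _ a)) => y.
    by rewrite (pair_image_back ne dK' kK' eK' bK' nb) (pair_image_back ne dK' kK' eK' aK' na).
  have := face_inj (distinct2 (fun e => neK' b bK' nb (esym e)))
    (distinct2 (fun e => neK' a aK' na (esym e))) eba.
  move/setP/(_ b); rewrite !inE eqxx orbT => /esym /orP [] /eqP // eb.
  by rewrite eb eqxx in nb.
exists a; split; first exact: neK'.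
rewrite eK'; congr face; apply/setP => z; rewrite !inE.
apply/idP/idP => [zK'|/orP [] /eqP -> //].
by case: (eqVneq z (omega k)) => //= nz; rewrite (a_uniq z zK' nz) eqxx.
Qed.

(* relabel k l is the index l' with tau_k(F(k,l)) = F(omega k, l'), and
   relabel k k = omega k: it tells which facet of the image a facet through
   a point of F(k) is carried to. *)
Definition relabel k l : sidx n :=
  if l == k then omega k else
  epsilon (inhabits l) (fun l' => l'.1 <> (omega k).1 /\
                                  Defs.image (tau k) (face2 k l) = face2 (omega k) l').

Lemma relabel_spec k l : k.1 <> l.1 ->
  (relabel k l).1 <> (omega k).1 /\
  Defs.image (tau k) (face2 k l) = face2 (omega k) (relabel k l).
Proof.
move=> ne; rewrite /relabel; case: eqP => [e|_]; first by subst l.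
exact: (epsilon_spec (inhabits l) _ (pair_image ne)).
Qed.

Lemma relabel_self k : relabel k k = omega k.
Proof. by rewrite /relabel eqxx. Qed.

Lemma relabelK k l : l = k \/ k.1 <> l.1 -> relabel (omega k) (relabel k l) = l.
Proof.
case=> [->|ne]; first by rewrite !relabel_self omegaK.
have [ne1 e1] := relabel_spec ne; set l' := relabel k l in ne1 e1 *.
have [ne2 e2] := relabel_spec (fun e => ne1 (esym e)).
set l'' := relabel (omega k) l' in ne2 e2 *; rewrite omegaK in ne2 e2.
have ekl : forall x, face2 k l x <-> face2 k l'' x.
  by move=> x; rewrite -(image_tauK (@facet_of_face2 k l)) e1 e2.
move: (face_inj (distinct2 ne) (distinct2 (fun e => ne2 (esym e))) ekl).
by move/setP/(_ l''); rewrite !inE eqxx orbT => /orP [] /eqP // e; rewrite e in ne2.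
Qed.

Lemma relabel_inj k K : distinct_abs K -> k \in K -> {in K &, injective (relabel k)}.
Proof.
move=> dK kK x y xK yK e.
by rewrite -(relabelK (distinct_cases dK kK xK)) e (relabelK (distinct_cases dK kK yK)).
Qed.

Lemma relabel_image_sub k K K' : distinct_abs K -> k \in K -> distinct_abs K' ->
  Defs.image (tau k) (face K) = face K' -> relabel k @: K \subset K'.
Proof.
move=> dK kK dK' eK'; apply/subsetP => _ /imsetP [l lK ->].
have: [set omega k; relabel k l] \subset K'.
  apply: (face_sub dK') => y; rewrite -eK' => -[x [Kx ->]].
  case: (distinct_cases dK kK lK) => [->|ne].
    by rewrite relabel_self setUid; apply: tau_facet; apply: facet_of_face Kx.
  have [_ e2] := relabel_spec ne; rewrite -/(face2 _ _) -e2.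
  by exists x; split => //; apply: face2_sub Kx.
by rewrite subUset !sub1set => /andP [].
Qed.

Lemma image_tau_face k K : distinct_abs K -> k \in K ->
  Defs.image (tau k) (face K) = face (relabel k @: K) /\ distinct_abs (relabel k @: K).
Proof.
move=> dK kK; have [K' [dK' [kK' eK']]] := tau_face dK kK.
have [K'' [dK'' [kK'' eK'']]] := tau_face dK' kK'.
have eK : K'' = K.
  apply: face_inj => // x; rewrite -eK'' -eK'.
  by apply: image_tauK => y; apply: facet_of_face.
rewrite eK omegaK in eK'' kK''.
suff -> : relabel k @: K = K' by [].
apply/eqP; rewrite eqEcard (relabel_image_sub dK kK dK' eK') /=.
rewrite (card_in_imset (relabel_inj dK kK)) -(card_in_imset (relabel_inj dK' kK')).
exact/subset_leq_card/(relabel_image_sub dK' kK' dK eK'').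
Qed.

Lemma active_tau q k : cube q -> k \in active q ->
  active (tau k q) = relabel k @: active q.
Proof.
move=> cq kq.
have [eq _] := image_tau_face (@active_distinct _ q) kq.
have [cq' kq'] := proj1 (facetE _ _) (tau_facet (proj2 (facetE _ _) (conj cq kq))).
have [eq' _] := image_tau_face (@active_distinct _ (tau k q)) kq'.
have sub1 : relabel k @: active q \subset active (tau k q).
  have [] // := proj1 (faceE _ _) (_ : face (relabel k @: active q) (tau k q)).
  by rewrite -eq; exists q; split => //; apply/faceE.
have sub2 : relabel (omega k) @: active (tau k q) \subset active q.
  have [] // := proj1 (faceE _ _) (_ : face (relabel (omega k) @: active (tau k q)) q).
  rewrite -eq'; exists (tau k q); split; first by apply/faceE.
  by rewrite tauK //; apply/facetE.
apply/esym/eqP; rewrite eqEcard sub1 /=.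
rewrite (card_in_imset (relabel_inj (@active_distinct _ q) kq)).
rewrite -(card_in_imset (relabel_inj (@active_distinct _ _) kq')).
exact: subset_leq_card.
Qed.

Lemma tau_commute k l y : k.1 <> l.1 -> face2 k l y ->
  tau (relabel k l) (tau k y) = tau (relabel l k) (tau l y).
Proof.
move=> ne kly; have [ne1 e1] := relabel_spec ne.
have [ne2 e2] := relabel_spec (fun e => ne (esym e)).
apply: (tau_cocycle ne) => //; first by move=> e; apply: ne1.
by rewrite face2C e2 face2C.
Qed.

(* For a face F(K) inside F(k,l), relabelling K along k and then along the
   image of l gives the same set as relabelling along l and then along the
   image of k, since both describe the same image of F(K). *)
Lemma relabel_sets_commute K k l : distinct_abs K -> k \in K -> l \in K -> k.1 <> l.1 ->
  relabel (relabel k l) @: (relabel k @: K) = relabel (relabel l k) @: (relabel l @: K).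
Proof.
move=> dK kK lK ne.
have [e1 d1] := image_tau_face dK kK; have [e2 d2] := image_tau_face dK lK.
have [e11 d11] := image_tau_face d1 (imset_f _ lK).
have [e22 d22] := image_tau_face d2 (imset_f _ kK).
apply: face_inj => // x; rewrite -e11 -e22 -e1 -e2.
have hc y : face K y -> tau (relabel k l) (tau k y) = tau (relabel l k) (tau l y).
  by move=> Ky; apply: tau_commute ne (face2_sub kK lK Ky).
by split => /image_comp [y [Ky ->]]; apply/image_comp; exists y; rewrite hc.
Qed.

Lemma relabel_commute K k l : distinct_abs K -> k \in K -> l \in K -> k != l ->
  {in K, relabel (relabel k l) \o relabel k =1 relabel (relabel l k) \o relabel l}.
Proof.
move=> dK kK lK nkl.
have ne : k.1 <> l.1 by case: (distinct_cases dK kK lK) => // e; rewrite e eqxx in nkl.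
have [ne1 _] := relabel_spec ne; have [ne2 _] := relabel_spec (fun e => ne (esym e)).
set k' := relabel k l in ne1 *; set l' := relabel l k in ne2 *.
set f := relabel k' \o relabel k; set g := relabel l' \o relabel l.
have [_ d1] := image_tau_face dK kK.
have f_inj : {in K &, injective f}.
  move=> x y xK yK fxy; apply: (relabel_inj dK kK xK yK).
  exact: (relabel_inj d1 (imset_f _ lK) (imset_f _ xK) (imset_f _ yK) fxy).
have fg (S : {set sidx n}) : S \subset K -> k \in S -> l \in S -> f @: S = g @: S.
  move=> sSK kS lS.
  by have := relabel_sets_commute (distinct_sub sSK dK) kS lS ne; rewrite -!imset_comp.
(* f and g map {k, l} to the same pair; matching k with l crosswise would
   force omega k = omega l. *)
have [fk fl] : f k = g k /\ f l = g l.
  have klK : [set k; l] \subset K by rewrite subUset !sub1set kK lK.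
  have := fg _ klK (setU11 _ _) (setU1r _ (set11 _)).
  rewrite !imsetU1 !imset_set1 => efg.
  have : f k \in [set g k; g l] by rewrite -efg !inE eqxx.
  have : f l \in [set g k; g l] by rewrite -efg !inE eqxx orbT.
  rewrite !inE => /orP [] /eqP efl /orP [] /eqP efk //.
  - by case/negP: nkl; apply/eqP; apply: (f_inj k l kK lK); rewrite efk efl.
  - exfalso; move: efl efk.
    rewrite /f /g /= -/k' -/l' !relabel_self => /(can_inj omegaK) ekl.
    have ne2' : k'.1 <> (omega l).1 by rewrite ekl.
    rewrite -ekl => /(congr1 (relabel (omega k'))).
    rewrite !relabelK; [|by right|by right] => /(can_inj omegaK) ekl'.
    by rewrite ekl' eqxx in nkl.
  - by case/negP: nkl; apply/eqP; apply: (f_inj k l kK lK); rewrite efk efl.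
exact: agree_from_imsets f_inj kK lK fg fk fl.
Qed.

(* A state is a point q together with a labelling of the indices of J by the
   facets through q; the step i applies tau along the facet labelled i and
   relabels accordingly. *)
Definition state := (pt n * (sidx n -> sidx n))%type.

Definition step (st : state) (i : sidx n) : state :=
  (tau (st.2 i) st.1, relabel (st.2 i) \o st.2).

Definition run (st : state) (s : seq (sidx n)) : state := foldl step st s.

Definition tracks (J : {set sidx n}) (st : state) : Prop :=
  [/\ cube st.1, st.2 @: J = active st.1 & {in J &, injective st.2}].

Definition same_on (J : {set sidx n}) (s1 s2 : state) : Prop :=
  s1.1 = s2.1 /\ {in J, s1.2 =1 s2.2}.

Lemma same_on_trans J s1 s2 s3 : same_on J s1 s2 -> same_on J s2 s3 -> same_on J s1 s3.
Proof.
by case=> e1 e1' [e2 e2']; split => [|j jJ]; [rewrite e1 | rewrite e1' ?e2'].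
Qed.

Lemma step_same_on J s1 s2 i : same_on J s1 s2 -> i \in J ->
  same_on J (step s1 i) (step s2 i).
Proof. by case=> e1 e2 iJ; split => [|j jJ] /=; rewrite ?e1 !e2. Qed.

Lemma label_active J st i : tracks J st -> i \in J -> st.2 i \in active st.1.
Proof. by case=> _ <- _ iJ; apply: imset_f. Qed.

Lemma step_tracks J st i : tracks J st -> i \in J -> tracks J (step st i).
Proof.
move=> tr iJ; have kq := label_active tr iJ; case: tr => cq eJ inj.
have /facetE [cq' _] := tau_facet (proj2 (facetE _ _) (conj cq kq)).
split => //=; first by rewrite (active_tau cq kq) -eJ -imset_comp.
move=> x y xJ yJ /= e; apply: inj => //.
by apply: (relabel_inj (@active_distinct _ _) kq) => //; rewrite -eJ imset_f.
Qed.

Lemma run_tracks J st s : tracks J st -> {subset s <= J} -> tracks J (run st s).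
Proof.
elim: s st => [//|i s IH] st tr sJ /=.
apply: IH => [|j js]; last by apply: sJ; rewrite inE js orbT.
by apply: step_tracks; rewrite ?sJ ?inE ?eqxx.
Qed.

Lemma step_twice J st i : tracks J st -> i \in J -> same_on J (step (step st i) i) st.
Proof.
move=> tr iJ; have kq := label_active tr iJ.
have fk : facet (st.2 i) st.1 by apply/facetE; split => //; case: tr.
split => [|j jJ] /=; rewrite relabel_self; first exact: tauK.
exact/relabelK/(distinct_cases (@active_distinct _ _) kq (label_active tr jJ)).
Qed.

Lemma step_swap J st a b : tracks J st -> a \in J -> b \in J -> a != b ->
  same_on J (step (step st a) b) (step (step st b) a).
Proof.
move=> tr aJ bJ nab; have kq := label_active tr aJ; have lq := label_active tr bJ.
case: (tr) => cq _ inj.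
have nkl : st.2 a != st.2 b by apply: contraNneq nab => /(inj _ _ aJ bJ) ->.
have ne : (st.2 a).1 <> (st.2 b).1.
  by case: (distinct_cases (@active_distinct _ _) kq lq) => // e; rewrite e eqxx in nkl.
split => [|j jJ] /=.
  by apply: tau_commute ne _; apply/faceE; rewrite subUset !sub1set kq lq.
exact: relabel_commute (@active_distinct _ _) kq lq nkl _ (label_active tr jJ).
Qed.

Definition toggle (S : {set sidx n}) i := if i \in S then S :\ i else i |: S.

Lemma in_toggle (S : {set sidx n}) i j :
  (j \in toggle S i) = (if j == i then i \notin S else j \in S).
Proof.
rewrite /toggle; case: (eqVneq j i) => [->|ne]; case: ifP => iS; rewrite !inE ?eqxx ?iS //.
- by rewrite ne.
- by rewrite (negbTE ne).
Qed.

Lemma run_toggle J st L i (S : {set sidx n}) :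
  tracks J st -> uniq L -> {subset L <= J} -> i \in L ->
  same_on J (step (run st [seq j <- L | j \in S]) i)
            (run st [seq j <- L | j \in toggle S i]).
Proof.
move=> tr; elim/last_ind: L => [//|L x IH].
rewrite rcons_uniq => /andP [xL uL] sLJ.
have sL : {subset L <= J} by move=> y yL; apply: sLJ; rewrite mem_rcons inE yL orbT.
have xJ : x \in J by apply: sLJ; rewrite mem_rcons inE eqxx.
have tr_run (s : {set sidx n}) : tracks J (run st [seq j <- L | j \in s]).
  by apply: run_tracks tr _ => y; rewrite mem_filter => /andP [_ /sL].
rewrite mem_rcons inE => /orP [/eqP eix|iL].
- subst i; rewrite !filter_rcons in_toggle eqxx.
  have -> : [seq j <- L | j \in toggle S x] = [seq j <- L | j \in S].
    apply: eq_in_filter => y yL; rewrite in_toggle.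
    by case: eqP => // e; rewrite -e yL in xL.
  by case: ifP => xS; rewrite /run foldl_rcons //; apply: step_twice.
- have nxi : x != i by apply: contraNneq xL => ->.
  rewrite !filter_rcons in_toggle (negbTE nxi).
  case: ifP => xS; last exact: IH.
  rewrite /run !foldl_rcons.
  apply: same_on_trans (step_swap (tr_run S) xJ (sL _ iL) nxi) _.
  exact: step_same_on (IH uL sL iL) xJ.
Qed.

Definition start (J : {set sidx n}) : state := (face_center J, id).

Definition reach (J S : {set sidx n}) : state :=
  run (start J) [seq i <- enum J | i \in S].

Lemma tracks_start J : distinct_abs J -> tracks J (start J).
Proof.
by move=> dJ; split; [exact: face_center_cube|rewrite imset_id active_face_center|].
Qed.

Lemma face_family_reach J : distinct_abs J -> forall g, valid_image tau (face J) g ->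
  exists2 S, S \in powerset J & g = face (active (reach J S).1).
Proof.
move=> dJ g; elim => [|g0 k _ [S SJ ->] sub].
  exists set0; first by rewrite powersetE sub0set.
  rewrite /reach (eq_filter (a2 := pred0)) ?filter_pred0 => [|x]; last by rewrite inE.
  by rewrite /= active_face_center.
have tr : tracks J (reach J S).
  by apply: run_tracks (tracks_start dJ) _ => y; rewrite mem_filter mem_enum => /andP [].
case: (tr) => cq eJ _.
have kq : k \in active (reach J S).1.
  have : [set k] \subset active (reach J S).1 by apply: face_sub (@active_distinct _ _) sub.
  by rewrite sub1set.
have /imsetP [i iJ ek] : k \in (reach J S).2 @: J by rewrite eJ.
exists (toggle S i).
  rewrite !powersetE in SJ *; rewrite /toggle; case: ifP => _.
  - exact: subset_trans (subD1set _ _) SJ.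
  - by rewrite subUset sub1set iJ SJ.
have sEJ : {subset enum J <= J} by move=> j; rewrite mem_enum.
have iE : i \in enum J by rewrite mem_enum.
have [<- _] := run_toggle S (tracks_start dJ) (enum_uniq J) sEJ iE.
rewrite /= -/(reach J S) -ek (active_tau cq kq).
by case: (image_tau_face (@active_distinct _ _) kq).
Qed.

End Pairing.

Lemma cardinal_image_seq (A : eqType) (U : Type) (f : A -> U) (s : seq A) :
  exists2 m, (m <= size s)%N & cardinal U (fun u => exists2 a, a \in s & u = f a) m.
Proof.
elim: s => [|a s [m le_m card_m]].
  exists 0 => //; suff -> : (fun u => exists2 a, a \in [::] & u = f a) = Empty_set U.
    exact: card_empty.
  by apply: Extensionality_Ensembles; split => u; case.
case: (classic (exists2 b, b \in s & f a = f b)) => [[b bs eab]|fresh].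
  exists m; first exact: leqW.
  suff -> : (fun u => exists2 c, c \in a :: s & u = f c) =
            (fun u => exists2 c, c \in s & u = f c) by [].
  apply: Extensionality_Ensembles; split => u [c].
  - by rewrite inE => /orP [/eqP -> ->|cs ->]; [exists b | exists c].
  - by move=> cs ->; exists c; rewrite // inE cs orbT.
exists m.+1 => //.
suff -> : (fun u => exists2 c, c \in a :: s & u = f c) =
          Add U (fun u => exists2 c, c \in s & u = f c) (f a).
  by apply: card_add => // -[b bs eab]; apply: fresh; exists b.
apply: Extensionality_Ensembles; split => u.
- case=> c; rewrite inE => /orP [/eqP -> ->|cs ->]; first exact: Add_intro2.
  by apply: Add_intro1; exists c.
- case=> [v [c cs ->]|_ <-]; first by exists c; rewrite // inE cs orbT.
  by exists a; rewrite ?inE ?eqxx.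
Qed.

Lemma cardinal_sub_image (A : eqType) (U : Type) (f : A -> U) (s : seq A) (E : Ensemble U) :
  Included U E (fun u => exists2 a, a \in s & u = f a) ->
  exists2 m, (m <= size s)%N & cardinal U E m.
Proof.
move=> sub; have [m' le_m' card_m'] := cardinal_image_seq f s.
have [m card_m] := finite_cardinal _ _
  (Finite_downward_closed _ _ (cardinal_finite _ _ _ card_m') _ sub).
exists m => //; apply: leq_trans le_m'; apply/leP.
exact: incl_card_le card_m card_m' sub.
Qed.

Theorem mainTheorem3 (n : nat) (omega : sidx n -> sidx n)
    (tau : sidx n -> pt n -> pt n) :
  regular_facets_pairing omega tau ->
  forall J : {set sidx n}, distinct_abs J -> J != set0 ->
    (exists m : nat, (m <= 2 ^ #|J|)%N /\
       cardinal _ (face_family tau (face J)) m) /\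
    (cardinal _ (face_family tau (face J)) (2 ^ #|J|) <-> perfect tau J).
Proof.
case=> [[_ [omegaK [tau_facet [tauK [_ [tau_face tau_cocycle]]]]]] _] J dJ _.
split; last by [].
pose reached S := face (active (reach omega tau J S).1).
have sub : Included _ (face_family tau (face J))
                      (fun g => exists2 S, S \in enum (powerset J) & g = reached S).
  move=> g /(face_family_reach omegaK tau_facet tauK tau_face tau_cocycle dJ) [S SJ ->].
  by exists S; rewrite ?mem_enum.
have [m le_m card_m] := cardinal_sub_image sub.
by exists m; rewrite -card_powerset cardE.
Qed.
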